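(* a) For all $k' \in \mathbf{N}$ and all $k \in \mathbf{N}_-$, $$\hat{\sigma}^{k'}(\hat{\Phi}^\alpha(\mu, \cdot))(k) = \hat{\Phi}^{\hat{\sigma}^{k'}(\alpha)}(\hat{\Phi}^\alpha(\mu, k'-1), k).$$ b) For all $t' \in \mathbf{R}$ and all $t \in \mathbf{R}$, $$\sigma^{t'}(\Phi^\rho(\mu, \cdot))(t) = \Phi^{\sigma^{t'}(\rho)}(\Phi^\rho(\mu, t'-0), t).$$
   Context: Let $\mathbf{B}=\{0,1\}$ with the discrete topology, $\mathbf{N}_-=\{-1,0,1,\dots\}$, and let a function $\Phi:\mathbf{B}^n\to\mathbf{B}^n$ and an initial state $\mu\in\mathbf{B}^n$ be given. For $\lambda\in\mathbf{B}^n$, $\Phi^\lambda:\mathbf{B}^n\to\mathbf{B}^n$ is defined by $\Phi^\lambda_i(\mu)=\Phi_i(\mu)$ if $\lambda_i=1$ and $\Phi^\lambda_i(\mu)=\mu_i$ if $\lambda_i=0$; for $\alpha^0,\dots,\alpha^{k+1}\in\mathbf{B}^n$ one sets iteratively $\Phi^{\alpha^0\dots\alpha^{k}\alpha^{k+1}}(\mu)=\Phi^{\alpha^{k+1}}(\Phi^{\alpha^0\dots\alpha^k}(\mu))$. Discrete time: a computation function is a sequence $\alpha:\mathbf{N}\to\mathbf{B}^n$ (write $\alpha^k=\alpha(k)$); it is progressive if for every $i\in\{1,\dots,n\}$ the set $\{k\in\mathbf{N}\mid \alpha_i^k=1\}$ is infinite. Let $\alpha$ be progressive. The discrete time flow is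 $\hat{\Phi}^\alpha(\mu,-1)=\mu$ and $\hat{\Phi}^\alpha(\mu,k)=\Phi^{\alpha^0\dots\alpha^k}(\mu)$ for $k\ge 0$. For $k'\in\mathbf{N}$ the forgetful functions are $\hat{\sigma}^{k'}(\hat{x})(k)=\hat{x}(k+k')$ for signals $\hat{x}:\mathbf{N}_-\to\mathbf{B}^n$, and $(\hat{\sigma}^{k'}(\alpha))^k=\alpha^{k+k'}$ for computation functions. Real time: $(t_k)_{k\in\mathbf{N}}$ is a strictly increasing real sequence unbounded from above, and $\rho:\mathbf{R}\to\mathbf{B}^n$ is $\rho(t)=\alpha^0\chi_{\{t_0\}}(t)\oplus\alpha^1\chi_{\{t_1\}}(t)\oplus\dots\oplus\alpha^k\chi_{\{t_k\}}(t)\oplus\dots$, where $\chi_A$ is the characteristic function of $A\subset\mathbf{R}$ and $\alpha$ is the progressive sequence above (so for each $i$ the set $\{t\mid\rho_i(t)=1\}$ is unbounded from above). The real time flow is $\Phi^\rho(\mu,t)=\hat{\Phi}^\alpha(\mu,-1)\chi_{(-\infty,t_0)}(t)\oplus\hat{\Phi}^\alpha(\mu,0)\chi_{[t_0,t_1)}(t)\oplus\dots\oplus\hat{\Phi}^\alpha(\mu,k)\chi_{[t_k,t_{k+1})}(t)\oplus\dots$ (and similarly for any other function of this form in place of $\rho$). For a piecewise constant signal $x:\mathbf{R}\to\mathbf{B}^n$ of this kind, $x(t-0)$ denotes its left limit at $t$ (the value taken by $x$ on some interval $(t-\varepsilon,t)$). For $t'\in\mathbf{R}$ the forgetful functions are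 $\sigma^{t'}(x)(t)=x(t)$ if $t\ge t'$ and $\sigma^{t'}(x)(t)=x(t'-0)$ if $t<t'$, and $\sigma^{t'}(\rho)(t)=\rho(t)\cdot\chi_{[t',\infty)}(t)$. *)

From Stdlib Require Import Reals ZArith ClassicalEpsilon ClassicalDescription.
From mathcomp Require Import ssreflect ssrbool ssrfun eqtype ssrnat fintype finfun.

Set Implicit Arguments.
Unset Strict Implicit.
Unset Printing Implicit Defensive.

Definition Bn (n : nat) := {ffun 'I_n -> bool}.

Definition decb (P : Prop) : bool :=
  if excluded_middle_informative P then true else false.

Definition Phi_upd (n : nat) (Phi : Bn n -> Bn n) (lam : Bn n) (mu : Bn n) : Bn n :=
  [ffun i => if lam i then Phi mu i else mu i].

Definition progressive (n : nat) (alpha : nat -> Bn n) : Prop :=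
  forall (i : 'I_n) (N : nat), exists k : nat, (N <= k)%N /\ alpha k i = true.

Fixpoint iter_upd (n : nat) (Phi : Bn n -> Bn n) (alpha : nat -> Bn n)
  (mu : Bn n) (m : nat) : Bn n :=
  match m with
  | O => mu
  | S m' => Phi_upd Phi (alpha m') (iter_upd Phi alpha mu m')
  end.

(* discrete time flow; N_- = {-1,0,1,...} is represented by integers k >= -1.
   hatPhi alpha mu (-1) = mu, hatPhi alpha mu k = Phi^{alpha^0...alpha^k}(mu). *)
Definition hatPhi (n : nat) (Phi : Bn n -> Bn n) (alpha : nat -> Bn n)
  (mu : Bn n) (k : Z) : Bn n :=
  iter_upd Phi alpha mu (Z.to_nat (k + 1)).

Definition hat_sigma_sig (n : nat) (k' : nat) (x : Z -> Bn n) : Z -> Bn n :=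
  fun k => x (k + Z.of_nat k')%Z.

Definition hat_sigma_cf (n : nat) (k' : nat) (alpha : nat -> Bn n) : nat -> Bn n :=
  fun k => alpha (k + k')%N.

Definition strictly_increasing (t : nat -> R) : Prop :=
  forall k : nat, (t k < t (S k))%R.

Definition unbounded_above (t : nat -> R) : Prop :=
  forall M : R, exists k : nat, (M < t k)%R.

(* rho(s) = XOR_k alpha^k chi_{t_k}(s) *)
Definition rho_of (n : nat) (t : nat -> R) (alpha : nat -> Bn n) : R -> Bn n :=
  fun s => [ffun i => decb (exists k : nat, t k = s /\ alpha k i = true)].

(* real time flow of the function of the form rho_of t alpha:
   mu chi_{(-oo,t_0)} XOR hatPhi(mu,0) chi_{[t_0,t_1)} XOR ... *)
Definition realFlow (n : nat) (Phi : Bn n -> Bn n) (t : nat -> R)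
  (alpha : nat -> Bn n) (mu : Bn n) : R -> Bn n :=
  fun s => [ffun i => decb ((s < t O)%R /\ mu i = true \/
              exists k : nat, (t k <= s < t (S k))%R
                 /\ hatPhi Phi alpha mu (Z.of_nat k) i = true)].

Definition is_left_lim (n : nat) (x : R -> Bn n) (t : R) (v : Bn n) : Prop :=
  exists eps : R, (0 < eps)%R /\ forall s : R, (t - eps < s < t)%R -> x s = v.

Definition left_lim (n : nat) (x : R -> Bn n) (t : R) : Bn n :=
  epsilon (inhabits (x t)) (is_left_lim x t).

Definition sigma_sig (n : nat) (t' : R) (x : R -> Bn n) : R -> Bn n :=
  fun s => if Rle_dec t' s then x s else left_lim x t'.

Definition sigma_rho (n : nat) (t' : R) (rho : R -> Bn n) : R -> Bn n :=
  fun s => [ffun i => rho s i && (if Rle_dec t' s then true else false)].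

From Stdlib Require Import Reals ZArith Lra Lia ClassicalEpsilon ClassicalDescription.
From mathcomp Require Import ssreflect ssrbool ssrfun eqtype ssrnat fintype finfun.
From mathcomp Require Import zify.

Set Implicit Arguments.
Unset Strict Implicit.

(* Part a) is the semigroup property of iteration.  For part b), write [rho]
   for the function of the form [rho_of t alpha].  At every time [u] the state
   of the real time flow at [u] arises from its state just before [u] by the
   update [Phi^(rho u)], and it is constant on intervals where [rho] vanishes.
   Hence the flow is governed by [rho] alone: from time [t'] on, [rho] and
   [sigma^t'(rho)] coincide, and before [t'] the latter vanishes, so an
   induction over the update times of [sigma^t'(rho)] after [t'] shows that
   the two flows agree once the second one is started at [Phi^rho(mu, t' - 0)]. *)

Open Scope R_scope.

Definition initial_segment (P : nat -> Prop) (m : nat) : Prop :=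
  forall j, P j <-> (j < m)%N.

Definition count_below (P : nat -> Prop) : nat :=
  epsilon (inhabits 0%N) (initial_segment P).

Lemma initial_segment_le m1 m2 :
  (forall j, (j < m1)%N -> (j < m2)%N) -> (m1 <= m2)%N.
Proof. by case: m1 => // m1 H; exact: H m1 (ltnSn m1). Qed.

Lemma initial_segment_uniq P m1 m2 :
  initial_segment P m1 -> initial_segment P m2 -> m1 = m2.
Proof.
move=> H1 H2; apply/eqP; rewrite eqn_leq.
by apply/andP; split; apply: initial_segment_le => j; [move=> /H1 /H2 | move=> /H2 /H1].
Qed.

Lemma count_belowE P m : initial_segment P m -> count_below P = m.
Proof.
move=> Hm; apply: (initial_segment_uniq (P := P) _ Hm).
exact: (epsilon_spec _ _ (ex_intro _ m Hm)).
Qed.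

Lemma initial_segment_exists (P : nat -> Prop) K :
  (forall j, P j.+1 -> P j) -> ~ P K -> exists m, initial_segment P m.
Proof.
move=> down; have downP i j : (i <= j)%N -> P j -> P i.
  elim: j => [|j IH]; first by rewrite leqn0 => /eqP->.
  by rewrite leq_eqVlt => /orP [/eqP-> //| /IH Hi /down].
elim: K => [|K IH] nPK.
  by exists 0%N => j; split => // /(downP 0%N j (leq0n j)).
have [PK | /IH //] := classic (P K).
exists K.+1 => j; split => [Pj | ]; last by rewrite ltnS => /downP; apply.
by rewrite ltnNge; apply/negP => /downP /(_ Pj).
Qed.

Lemma count_belowP (P : nat -> Prop) K :
  (forall j, P j.+1 -> P j) -> ~ P K -> initial_segment P (count_below P).
Proof.
by move=> down /(initial_segment_exists down) [m Hm]; rewrite (count_belowE Hm).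
Qed.

Definition nb_lt (t : nat -> R) (x : R) : nat := count_below (fun j => t j < x).
Definition nb_le (t : nat -> R) (x : R) : nat := count_below (fun j => t j <= x).

Section IncreasingSequence.

Variable t : nat -> R.
Hypothesis t_incr : strictly_increasing t.
Hypothesis t_unbounded : unbounded_above t.

Lemma incr_lt j l : (j < l)%N -> t j < t l.
Proof.
elim: l => [|l IH]; first by rewrite ltn0.
rewrite ltnS leq_eqVlt => /orP [/eqP-> | /IH]; first exact: t_incr.
by have := t_incr l; lra.
Qed.

Lemma incr_lt_iff j l : t j < t l <-> (j < l)%N.
Proof.
split=> [h | /incr_lt //]; rewrite ltnNge; apply/negP.
by rewrite leq_eqVlt => /orP [/eqP e | /incr_lt]; [subst; lra | lra].
Qed.

Lemma incr_le_iff j l : t j <= t l <-> (j <= l)%N.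
Proof.
split=> [h | ].
  by rewrite leqNgt; apply/negP => /incr_lt; lra.
by rewrite leq_eqVlt => /orP [/eqP-> | /incr_lt]; lra.
Qed.

Lemma incr_inj j l : t j = t l -> j = l.
Proof.
by move=> e; apply/eqP; rewrite eqn_leq; apply/andP; split; apply/incr_le_iff; lra.
Qed.

Lemma nb_ltP x : initial_segment (fun j => t j < x) (nb_lt t x).
Proof.
have [K HK] := t_unbounded x.
by apply: (count_belowP (K := K)) => [j | ]; [have := t_incr j | ]; lra.
Qed.

Lemma nb_leP x : initial_segment (fun j => t j <= x) (nb_le t x).
Proof.
have [K HK] := t_unbounded x.
by apply: (count_belowP (K := K)) => [j | ]; [have := t_incr j | ]; lra.
Qed.

Lemma nb_lt_at j : nb_lt t (t j) = j.
Proof. by apply: count_belowE => i; exact: incr_lt_iff. Qed.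

Lemma nb_le_at j : nb_le t (t j) = j.+1.
Proof. by apply: count_belowE => i; rewrite ltnS; exact: incr_le_iff. Qed.

Lemma nb_le_off x : (forall j, t j <> x) -> nb_le t x = nb_lt t x.
Proof.
move=> off; apply: count_belowE => j; rewrite -nb_ltP.
by have := off j; split; lra.
Qed.

End IncreasingSequence.

Definition no_update (n : nat) : Bn n := [ffun=> false].

Lemma Phi_upd_no_update n (Phi : Bn n -> Bn n) mu :
  Phi_upd Phi (no_update n) mu = mu.
Proof. by apply/ffunP => i; rewrite !ffunE. Qed.

Lemma iter_upd_no_update n (Phi : Bn n -> Bn n) alpha mu m1 m2 :
  (m1 <= m2)%N -> (forall j, (m1 <= j)%N -> (j < m2)%N -> alpha j = no_update n) ->
  iter_upd Phi alpha mu m2 = iter_upd Phi alpha mu m1.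
Proof.
elim: m2 => [|m2 IH]; first by rewrite leqn0 => /eqP->.
rewrite leq_eqVlt => /orP [/eqP<- // | lt_m12] silent.
rewrite /= silent ?Phi_upd_no_update; try lia.
by apply: IH => [|j h1 h2]; [lia | apply: silent; lia].
Qed.

Lemma iter_upd_shift n (Phi : Bn n -> Bn n) alpha mu k' m :
  iter_upd Phi alpha mu (m + k') =
  iter_upd Phi (hat_sigma_cf k' alpha) (iter_upd Phi alpha mu k') m.
Proof. by elim: m => [|m IH] //=; rewrite IH. Qed.

Lemma hatPhi_of_nat n (Phi : Bn n -> Bn n) alpha mu k :
  hatPhi Phi alpha mu (Z.of_nat k) = iter_upd Phi alpha mu k.+1.
Proof. by rewrite /hatPhi; congr iter_upd; lia. Qed.

Lemma decb_iff (P : Prop) (b : bool) : (P <-> b = true) -> decb P = b.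
Proof.
rewrite /decb; case: excluded_middle_informative => [p | np] [PB BP].
  by rewrite PB.
by case: b PB BP => // _ /(_ erefl).
Qed.

Lemma left_lim_eq n (x : R -> Bn n) u v : is_left_lim x u v -> left_lim x u = v.
Proof.
move=> Hv; have [e1 [e1_gt0 H1]] := Hv.
have [e2 [e2_gt0 H2]] : is_left_lim x u (left_lim x u).
  by apply: epsilon_spec; exists v.
have e_pos := Rmin_glb_lt _ _ _ e1_gt0 e2_gt0.
have := Rmin_l e1 e2; have := Rmin_r e1 e2 => le2 le1.
by rewrite -(H2 (u - Rmin e1 e2 / 2)) ?H1 //; lra.
Qed.

Lemma sigma_rho_before n t' (r : R -> Bn n) u :
  u < t' -> sigma_rho t' r u = no_update n.
Proof.
move=> lt_ut; apply/ffunP => i; rewrite !ffunE.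
by destruct (Rle_dec t' u); [lra | rewrite andbF].
Qed.

Lemma sigma_rho_after n t' (r : R -> Bn n) u : t' <= u -> sigma_rho t' r u = r u.
Proof.
move=> le_tu; apply/ffunP => i; rewrite !ffunE.
by destruct (Rle_dec t' u); [rewrite andbT | lra].
Qed.

Definition flow_lt n (Phi : Bn n -> Bn n) t alpha mu u : Bn n :=
  iter_upd Phi alpha mu (nb_lt t u).
Definition flow_le n (Phi : Bn n -> Bn n) t alpha mu u : Bn n :=
  iter_upd Phi alpha mu (nb_le t u).

Section RealTimeFlow.

Variables (n : nat) (Phi : Bn n -> Bn n) (t : nat -> R) (alpha : nat -> Bn n).
Hypothesis t_incr : strictly_increasing t.
Hypothesis t_unbounded : unbounded_above t.

Local Notation rho := (rho_of t alpha).
Local Notation nb_ltP := (nb_ltP t_incr t_unbounded).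
Local Notation nb_leP := (nb_leP t_incr t_unbounded).

Lemma rho_of_at j : rho (t j) = alpha j.
Proof.
apply/ffunP => i; rewrite ffunE; apply: decb_iff.
by split => [[k [/(incr_inj t_incr) -> //]] | a_ji]; exists j.
Qed.

Lemma rho_of_off x : (forall j, t j <> x) -> rho x = no_update n.
Proof.
move=> off; apply/ffunP => i; rewrite !ffunE; apply: decb_iff.
by split => // [[k []]] /off.
Qed.

Lemma realFlowE mu u : realFlow Phi t alpha mu u = flow_le Phi t alpha mu u.
Proof.
apply/ffunP => i; rewrite ffunE /flow_le; apply: decb_iff.
have t0_le k : t 0%N <= t k by apply/(incr_le_iff t_incr).
have Hu := nb_leP u; case: (nb_le t u) Hu => [|m] Hu.
  have lt_u0 : u < t 0%N by apply: Rnot_le_lt => /Hu.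
  split => [[[_ ->] // | [k [[le_ku _] _]]] | mu_i]; last by left.
  by have := t0_le k; lra.
have le_mu : t m <= u by apply/Hu.
have lt_um : u < t m.+1 by apply: Rnot_le_lt => /Hu; rewrite ltnn.
split => [[[lt_u0 _] | [k [[le_ku lt_uk] a_ki]]] | a_mi].
- by have := t0_le m; lra.
- suff -> : m = k by rewrite hatPhi_of_nat in a_ki.
  have /Hu lt_km : t k <= u by [].
  have /(incr_lt_iff t_incr) lt_mk : t m < t k.+1 by lra.
  lia.
- by right; exists m; rewrite hatPhi_of_nat; split => //; lra.
Qed.

Lemma flow_le_step mu u :
  flow_le Phi t alpha mu u = Phi_upd Phi (rho u) (flow_lt Phi t alpha mu u).
Proof.
rewrite /flow_le /flow_lt.
have [[j <-] | off] := classic (exists j, t j = u).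
  by rewrite nb_le_at // nb_lt_at // rho_of_at.
have off' : forall j, t j <> u by move=> j e; apply: off; exists j.
by rewrite nb_le_off // rho_of_off // Phi_upd_no_update.
Qed.

Lemma flow_lt_silent_open mu a b :
  a < b -> (forall w, a < w < b -> rho w = no_update n) ->
  flow_lt Phi t alpha mu b = flow_le Phi t alpha mu a.
Proof.
move=> lt_ab silent; apply: iter_upd_no_update => [|j le_j lt_j].
  by apply: initial_segment_le => j /nb_leP ?; apply/nb_ltP; lra.
rewrite -rho_of_at silent //; split; last exact/nb_ltP.
by apply: Rnot_le_lt => /nb_leP; rewrite ltnNge le_j.
Qed.

Lemma flow_lt_silent_closed mu a b :
  a <= b -> (forall w, a <= w < b -> rho w = no_update n) ->
  flow_lt Phi t alpha mu b = flow_lt Phi t alpha mu a.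
Proof.
move=> le_ab silent; apply: iter_upd_no_update => [|j le_j lt_j].
  by apply: initial_segment_le => j /nb_ltP ?; apply/nb_ltP; lra.
rewrite -rho_of_at silent //; split; last exact/nb_ltP.
by apply: Rnot_lt_le => /nb_ltP; rewrite ltnNge le_j.
Qed.

Lemma flow_lt_silent_initial mu b :
  (forall w, w < b -> rho w = no_update n) -> flow_lt Phi t alpha mu b = mu.
Proof.
move=> silent; rewrite /flow_lt (@iter_upd_no_update _ _ _ _ 0%N) // => j _ lt_j.
by rewrite -rho_of_at silent //; exact/nb_ltP.
Qed.

Lemma realFlow_left_lim mu u :
  is_left_lim (realFlow Phi t alpha mu) u (flow_lt Phi t alpha mu u).
Proof.
have Hu := nb_ltP u; rewrite /flow_lt.
suff [eps [eps_gt0 Heps]] : exists eps, 0 < eps /\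
    forall w, u - eps < w < u -> nb_le t w = nb_lt t u.
  by exists eps; split => // w /Heps Hw; rewrite realFlowE /flow_le Hw.
case: (nb_lt t u) Hu => [|m] Hu.
  exists 1; split => [|w [_ lt_wu]]; first lra.
  by apply: count_belowE => j; split => [? | ]; [apply/Hu; lra | rewrite ltn0].
have lt_mu : t m < u by apply/Hu.
exists (u - t m); split => [|w [lt_mw lt_wu]]; first lra.
apply: count_belowE => j; split => [? | ]; first by apply/Hu; lra.
by rewrite ltnS => /(incr_le_iff t_incr); lra.
Qed.

End RealTimeFlow.

Section Restart.

Variables (n : nat) (Phi : Bn n -> Bn n) (mu : Bn n).
Variables (t s : nat -> R) (alpha beta : nat -> Bn n) (t' : R).
Hypotheses (t_incr : strictly_increasing t) (t_unbounded : unbounded_above t).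
Hypotheses (s_incr : strictly_increasing s) (s_unbounded : unbounded_above s).
Hypothesis rho_s_before : forall u, u < t' -> rho_of s beta u = no_update n.
Hypothesis rho_s_after : forall u, t' <= u -> rho_of s beta u = rho_of t alpha u.

Local Notation v := (flow_lt Phi t alpha mu t').

Lemma flow_lt_restart_quiet u :
  t' <= u -> (forall k, (k < nb_lt s u)%N -> s k < t') ->
  flow_lt Phi t alpha mu u = flow_lt Phi s beta v u.
Proof.
move=> le_tu quiet.
have silent w : w < u -> rho_of s beta w = no_update n.
  move=> lt_wu; have [/rho_s_before // | le_tw] := Rlt_le_dec w t'.
  apply: rho_of_off => k e; have := quiet k.
  by rewrite -(nb_ltP s_incr s_unbounded); lra.
rewrite (flow_lt_silent_initial _ s_incr s_unbounded _ silent).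
apply: flow_lt_silent_closed => // w [le_tw lt_wu].
by rewrite -rho_s_after // silent.
Qed.

Lemma flow_lt_restart u :
  t' <= u -> flow_lt Phi t alpha mu u = flow_lt Phi s beta v u.
Proof.
move Hm : (nb_lt s u) => m; elim: m u Hm => [|m IH] u Hm le_tu.
  by apply: flow_lt_restart_quiet => //; rewrite Hm.
have [lt_mt | le_tm] := Rlt_le_dec (s m) t'.
  apply: flow_lt_restart_quiet => // k; rewrite Hm ltnS.
  by move=> /(incr_le_iff s_incr); lra.
have lt_mu : s m < u by apply/(nb_ltP s_incr s_unbounded); rewrite Hm.
have silent w : s m < w < u -> rho_of s beta w = no_update n.
  move=> [lt_mw lt_wu]; apply: rho_of_off => k e.
  have := proj1 (nb_ltP s_incr s_unbounded u k); rewrite Hm ltnS.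
  by move/(_ ltac:(lra)) => /(incr_le_iff s_incr); lra.
rewrite (flow_lt_silent_open _ s_incr s_unbounded _ lt_mu silent).
rewrite (flow_lt_silent_open _ t_incr t_unbounded _ lt_mu); last first.
  by move=> w [? ?]; rewrite -rho_s_after ?silent //; lra.
rewrite !flow_le_step // rho_s_after // IH //.
exact: nb_lt_at.
Qed.

End Restart.

Lemma realFlow_sigma n (Phi : Bn n -> Bn n) (mu : Bn n) (alpha : nat -> Bn n)
  (t : nat -> R) (t' tt : R) (s : nat -> R) (beta : nat -> Bn n) :
  strictly_increasing t -> unbounded_above t ->
  strictly_increasing s -> unbounded_above s ->
  (forall u : R, rho_of s beta u = sigma_rho t' (rho_of t alpha) u) ->
  sigma_sig t' (realFlow Phi t alpha mu) tt =
  realFlow Phi s beta (left_lim (realFlow Phi t alpha mu) t') tt.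
Proof.
move=> t_incr t_unb s_incr s_unb rho_s.
have before u : u < t' -> rho_of s beta u = no_update n.
  by move=> ?; rewrite rho_s sigma_rho_before.
have after u : t' <= u -> rho_of s beta u = rho_of t alpha u.
  by move=> ?; rewrite rho_s sigma_rho_after.
rewrite /sigma_sig (left_lim_eq (realFlow_left_lim _ _ t_incr t_unb _ _)).
rewrite !realFlowE // !flow_le_step //.
destruct (Rle_dec t' tt) as [le_t | not_le_t].
  by rewrite after // (flow_lt_restart _ _ t_incr t_unb s_incr s_unb before after).
have lt_t := Rnot_le_lt _ _ not_le_t.
rewrite /= before // Phi_upd_no_update (flow_lt_silent_initial _ s_incr s_unb) //.
by move=> w ?; apply: before; lra.
Qed.

Theorem theorem29 (n : nat) (Phi : Bn n -> Bn n) (mu : Bn n)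
  (alpha : nat -> Bn n) (t : nat -> R) :
  progressive alpha ->
  strictly_increasing t ->
  unbounded_above t ->
  (* a) *)
  (forall (k' : nat) (k : Z), (-1 <= k)%Z ->
     hat_sigma_sig k' (hatPhi Phi alpha mu) k =
     hatPhi Phi (hat_sigma_cf k' alpha)
       (hatPhi Phi alpha mu (Z.of_nat k' - 1)%Z) k)
  /\
  (* b) the flow of sigma^{t'}(rho) is computed from any representation
        (s, beta) of sigma^{t'}(rho) as a function of the form above *)
  (forall (t' tt : R) (s : nat -> R) (beta : nat -> Bn n),
     strictly_increasing s -> unbounded_above s ->
     (forall u : R, rho_of s beta u = sigma_rho t' (rho_of t alpha) u) ->
     sigma_sig t' (realFlow Phi t alpha mu) tt =
     realFlow Phi s beta (left_lim (realFlow Phi t alpha mu) t') tt).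
Proof.
move=> _ t_incr t_unb; split => [k' k le_k | t' tt s beta *]; last exact: realFlow_sigma.
rewrite /hat_sigma_sig /hatPhi.
have -> : Z.to_nat (Z.of_nat k' - 1 + 1) = k' by lia.
have -> : Z.to_nat (k + Z.of_nat k' + 1) = (Z.to_nat (k + 1) + k')%N by lia.
exact: iter_upd_shift.
Qed.
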